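(* Let $T:\mathcal{S}_n\to\mathcal{S}_n$ be a bijective isometry with respect to the Hausdorff distance, and let $(K_0,K_1)$ be an $\mathcal{S}_n$-cute pair. Then $(TK_0,TK_1)$ is an $\mathcal{S}_n$-cute pair, and moreover $T\left(\tfrac12 K_0+\tfrac12 K_1\right)=\tfrac12\left(T(K_0)+T(K_1)\right)$.
   Context: Convex bodies are compact convex non-empty subsets of $\mathbb{R}^n$; $B_2^n$ is the closed Euclidean unit ball; $\delta$ is the Hausdorff distance $\delta(K_0,K_1)=\inf\{\lambda>0: K_0\subseteq K_1+\lambda B_2^n,\ K_1\subseteq K_0+\lambda B_2^n\}$. $\mathcal{S}_n$ is the set of convex bodies in $\mathbb{R}^n$ which are intersections of Euclidean unit balls. A pair $(K_0,K_1)\in\mathcal{S}_n\times\mathcal{S}_n$ is called $\mathcal{S}_n$-cute if $M=\frac{K_0+K_1}{2}$ (Minkowski average, which lies in $\mathcal{S}_n$) is the unique body in $\mathcal{S}_n$ satisfying $\delta(K_0,M)=\frac12\delta(K_0,K_1)$ and $\delta(K_1,M)=\frac12\delta(K_0,K_1)$. *)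

From HB Require Import structures.
From mathcomp Require Import all_boot all_order all_algebra.
From mathcomp Require Import all_classical all_reals all_analysis.
Set Implicit Arguments. Unset Strict Implicit. Unset Printing Implicit Defensive.
Import Order.TTheory GRing.Theory Num.Theory.
Import numFieldTopology.Exports numFieldNormedType.Exports.
Local Open Scope classical_set_scope.
Local Open Scope ring_scope.

Section Defs.
Variables (R : realType) (n : nat).
Notation V := 'rV[R]_n.

Definition enorm (x : V) : R := Num.sqrt (\sum_(i < n) (x ord0 i) ^+ 2).

Definition eball (c : V) (r : R) : set V := [set x | enorm (x - c) <= r].

Definition is_convex (K : set V) : Prop :=
  forall x y t, K x -> K y -> 0 <= t <= 1 -> K ((1 - t) *: x + t *: y).

Definition convex_body (K : set V) : Prop :=
  compact K /\ is_convex K /\ K !=set0.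

Definition msum (A B : set V) : set V := [set a + b | a in A & b in B].
Definition mscale (t : R) (A : set V) : set V := [set t *: a | a in A].

Definition hdist (K0 K1 : set V) : R :=
  inf [set l : R | 0 < l /\ K0 `<=` msum K1 (eball 0 l) /\ K1 `<=` msum K0 (eball 0 l)].

Definition Sn (K : set V) : Prop :=
  convex_body K /\ exists C : set V, K = [set x | forall c, C c -> eball c 1 x].

Definition mavg (K0 K1 : set V) : set V := mscale (2^-1) (msum K0 K1).

Definition Sn_cute (K0 K1 : set V) : Prop :=
  Sn K0 /\ Sn K1 /\
  let M := mavg K0 K1 in
  let d := hdist K0 K1 in
  Sn M /\ hdist K0 M = d / 2 /\ hdist K1 M = d / 2 /\
  (forall M', Sn M' -> hdist K0 M' = d / 2 -> hdist K1 M' = d / 2 -> M' = M).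

Definition Sn_bij_isometry (T : set V -> set V) : Prop :=
  (forall K, Sn K -> Sn (T K)) /\
  (forall K L, Sn K -> Sn L -> T K = T L -> K = L) /\
  (forall L, Sn L -> exists K, Sn K /\ T K = L) /\
  (forall K L, Sn K -> Sn L -> hdist (T K) (T L) = hdist K L).
End Defs.

From HB Require Import structures.
From mathcomp Require Import all_boot all_order all_algebra.
From mathcomp Require Import all_classical all_reals all_analysis.
From mathcomp Require Import ring lra.
Set Implicit Arguments. Unset Strict Implicit. Unset Printing Implicit Defensive.
Import Order.TTheory GRing.Theory Num.Theory.
Import numFieldTopology.Exports numFieldNormedType.Exports.
Local Open Scope classical_set_scope.
Local Open Scope ring_scope.

(* If [m] lies outside the Minkowski average [(A + B) / 2] of two intersections
   of unit balls, let [p = (a + b) / 2] be its nearest point and [u] the unit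
   outer normal there.  As [A] is an intersection of unit balls, it lies in the
   unit ball centred at [a - u]: otherwise a chord of [A], bulged outwards as
   every unit ball allows, would cross the supporting hyperplane at [a].
   Likewise [B] lies in the unit ball at [b - u], so [(A + B) / 2] in the one at
   [p - u], which misses [m]; hence [(A + B) / 2] is in [S_n].  The Minkowski
   average of two convex bodies is at Hausdorff distance exactly [d / 2] from
   each of them, so [(T K0 + T K1) / 2] is equidistant from [T K0] and [T K1];
   pulling it back through the isometry [T] and using that [(K0, K1)] is cute
   identifies it with [T ((K0 + K1) / 2)]. *)

Ltac row_ring := apply/rowP => ?; rewrite !mxE; ring.
Ltac row_field := apply/rowP => ?; rewrite !mxE; field.

Section Euclidean.
Variables (R : realType) (n : nat).
Notation V := 'rV[R]_n.

Definition dot (x y : V) : R := \sum_(i < n) x ord0 i * y ord0 i.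
Definition sqnorm (x : V) : R := dot x x.

Lemma dotC x y : dot x y = dot y x.
Proof. by apply: eq_bigr => i _; rewrite mulrC. Qed.

Lemma dotDl x y z : dot (x + y) z = dot x z + dot y z.
Proof. by rewrite /dot -big_split; apply: eq_bigr => i _; rewrite mxE mulrDl. Qed.

Lemma dotDr x y z : dot z (x + y) = dot z x + dot z y.
Proof. by rewrite dotC dotDl !(dotC z). Qed.

Lemma dotZl a x y : dot (a *: x) y = a * dot x y.
Proof. by rewrite /dot mulr_sumr; apply: eq_bigr => i _; rewrite mxE mulrA. Qed.

Lemma dotZr a x y : dot y (a *: x) = a * dot y x.
Proof. by rewrite dotC dotZl dotC. Qed.

Lemma dotBl x y z : dot (x - y) z = dot x z - dot y z.
Proof. by rewrite dotDl -scaleN1r dotZl mulN1r. Qed.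

Lemma dotBr x y z : dot z (x - y) = dot z x - dot z y.
Proof. by rewrite dotC dotBl !(dotC z). Qed.

Lemma sqnorm_ge0 x : 0 <= sqnorm x.
Proof. by apply: sumr_ge0 => i _; rewrite -expr2 sqr_ge0. Qed.

Lemma sqnorm_eq0 x : sqnorm x = 0 -> x = 0.
Proof.
move=> /eqP; rewrite psumr_eq0 => [/allP x0|i _]; last by rewrite -expr2 sqr_ge0.
apply/rowP => i; rewrite mxE.
by have /implyP/(_ isT) := x0 i (mem_index_enum i); rewrite -expr2 sqrf_eq0 => /eqP.
Qed.

Lemma sqnormD x y : sqnorm (x + y) = sqnorm x + 2 * dot x y + sqnorm y.
Proof. rewrite /sqnorm !dotDl !dotDr (dotC y x); ring. Qed.

Lemma sqnormB x y : sqnorm (x - y) = sqnorm x - 2 * dot x y + sqnorm y.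
Proof. rewrite /sqnorm !dotBl !dotBr (dotC y x); ring. Qed.

Lemma sqnormZ a x : sqnorm (a *: x) = a ^+ 2 * sqnorm x.
Proof. rewrite /sqnorm dotZl dotZr; ring. Qed.

Lemma sqnorm_continuous : continuous sqnorm.
Proof.
rewrite (_ : sqnorm = fun x : V => \sum_(i < n) x ord0 i * x ord0 i) //.
apply: continuous_big => [|i _ x]; first exact: add_continuous.
by apply: continuousM; apply: coord_continuous.
Qed.

Lemma enormE (x : V) : enorm x = Num.sqrt (sqnorm x).
Proof. by congr Num.sqrt; apply: eq_bigr => i _; rewrite expr2. Qed.

Lemma enorm_ge0 (x : V) : 0 <= enorm x.
Proof. by rewrite enormE sqrtr_ge0. Qed.

Lemma enorm_sqr (x : V) : enorm x ^+ 2 = sqnorm x.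
Proof. by rewrite enormE sqr_sqrtr // sqnorm_ge0. Qed.

Lemma enorm_le (x : V) r : 0 <= r -> (enorm x <= r) = (sqnorm x <= r ^+ 2).
Proof.
move=> r0; rewrite enormE -(@ler_sqrt _ (sqnorm x) (r ^+ 2)) ?exprn_ge0 //.
by rewrite sqrtr_sqr ger0_norm.
Qed.

Lemma enormZ a (x : V) : enorm (a *: x) = `|a| * enorm x.
Proof. by rewrite !enormE sqnormZ sqrtrM ?sqr_ge0 // sqrtr_sqr. Qed.

Lemma enormN (x : V) : enorm (- x) = enorm x.
Proof. by rewrite -scaleN1r enormZ normrN normr1 mul1r. Qed.

Lemma dot_le_enormM (x y : V) : dot x y <= enorm x * enorm y.
Proof.
have [->|y0] := eqVneq y 0.
  by rewrite /dot big1 ?mulr_ge0 ?enorm_ge0 // => i _; rewrite mxE mulr0.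
have ny0 : 0 < sqnorm y.
  by rewrite lt_def sqnorm_ge0 andbT; apply: contra_neq y0; apply: sqnorm_eq0.
have cauchy_schwarz : dot x y ^+ 2 <= sqnorm x * sqnorm y.
  have := sqnorm_ge0 (sqnorm y *: x - dot x y *: y).
  rewrite sqnormB !sqnormZ dotZl dotZr -/(sqnorm y); nra.
move: cauchy_schwarz; rewrite -!enorm_sqr -exprMn.
have := mulr_ge0 (enorm_ge0 x) (enorm_ge0 y); nra.
Qed.

Lemma enormD (x y : V) : enorm (x + y) <= enorm x + enorm y.
Proof.
rewrite enorm_le ?addr_ge0 ?enorm_ge0 // sqnormD -!enorm_sqr.
have := dot_le_enormM x y; nra.
Qed.

Lemma enorm_continuous : continuous (@enorm R n).
Proof.
move=> x; rewrite (_ : @enorm R n = Num.sqrt \o sqnorm); last exact/funext/enormE.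
by apply: continuous_comp; [apply: sqnorm_continuous | apply: sqrt_continuous].
Qed.

Lemma eball0 l (x : V) : eball 0 l x <-> enorm x <= l.
Proof. by rewrite /eball /= subr0. Qed.

Lemma eball1E c (x : V) : eball c 1 x <-> sqnorm (x - c) <= 1.
Proof. by rewrite /eball /= enorm_le ?expr1n. Qed.

End Euclidean.

Section UnitBalls.
Variables (R : realType) (n : nat).
Notation V := 'rV[R]_n.

(* The bulge [rho] comes from [|a + t (y - a) - c|^2 <= 1 - 2 rho] (the chord
   point sinks into the ball) and [sqrt (1 - 2 rho) <= 1 - rho]. *)
Lemma eball1_bulge (c a y u : V) t : eball c 1 a -> eball c 1 y ->
  sqnorm u = 1 -> 0 <= t <= 1 ->
  eball c 1 (a + t *: (y - a) + ((1 - t) * t * sqnorm (y - a) / 2) *: u).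
Proof.
move=> /eball1E ha /eball1E hy u1 /andP[t0 t1]; apply/eball1E.
set rho := (1 - t) * t * sqnorm (y - a) / 2.
have rho0 : 0 <= rho by rewrite /rho !mulr_ge0 ?sqnorm_ge0 ?subr_ge0.
pose g := a - c + t *: (y - a).
have gE : sqnorm g = (1 - t) * sqnorm (a - c) + t * sqnorm (y - c) - 2 * rho.
  have -> : y - c = (a - c) + (y - a) by row_ring.
  by rewrite /g /rho (sqnormD (a - c)) (sqnormD (a - c)) sqnormZ dotZr; field.
have -> : a + t *: (y - a) + rho *: u - c = g + rho *: u by row_ring.
rewrite sqnormD sqnormZ dotZr u1.
have := dot_le_enormM g u; rewrite (enormE u) u1 sqrtr1 mulr1 -enorm_sqr in gE *.
have G0 := enorm_ge0 g.
have G2 : enorm g ^+ 2 <= 1 - 2 * rho by rewrite gE; nra.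
have G1 : enorm g <= 1 - rho by nra.
nra.
Qed.

Lemma unit_balls_supporting_ball (C K : set V) (a u : V) :
  K = [set x | forall c, C c -> eball c 1 x] -> K a -> sqnorm u = 1 ->
  (forall k, K k -> dot (k - a) u <= 0) -> K `<=` eball (a - u) 1.
Proof.
move=> KE Ka u1 normal y Ky; apply/eball1E; rewrite leNgt; apply/negP => far.
have := normal y Ky; move: far.
have -> : y - (a - u) = (y - a) + u by row_ring.
rewrite sqnormD u1; set s := sqnorm (y - a); set q := dot (y - a) u => far qle0.
have s0 : 0 <= s := sqnorm_ge0 _.
(* For this small [t] the bulged chord point [z] lies strictly beyond the
   supporting hyperplane [dot (x - a) u = 0]. *)
pose t := (s + 2 * q) / (2 * (s + 1) ^+ 2).
have den0 : 0 < 2 * (s + 1) ^+ 2 by rewrite mulr_gt0 ?exprn_gt0 //; lra.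
have tE : t * (2 * (s + 1) ^+ 2) = s + 2 * q by rewrite /t mulfVK ?gt_eqF.
have t0 : 0 < t by rewrite /t divr_gt0 //; nra.
have t01 : 0 <= t <= 1 by rewrite ltW //=; nra.
set z := a + t *: (y - a) + ((1 - t) * t * s / 2) *: u.
have Kz : K z.
  rewrite KE => c Cc; apply: eball1_bulge => //.
  - by move: Ka; rewrite KE => /(_ c Cc).
  - by move: Ky; rewrite KE => /(_ c Cc).
have := normal z Kz.
have -> : z - a = t *: (y - a) + ((1 - t) * t * s / 2) *: u by rewrite /z; row_ring.
rewrite dotDl !dotZl -/q -/(sqnorm u) u1; nra.
Qed.

End UnitBalls.

Section Hausdorff.
Variables (R : realType) (n : nat).
Notation V := 'rV[R]_n.

Definition hradii (A B : set V) : set R :=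
  [set l | 0 < l /\ A `<=` msum B (eball 0 l) /\ B `<=` msum A (eball 0 l)].

Lemma hradiiC (A B : set V) : hradii A B = hradii B A.
Proof. by apply/funext => l; apply/propext; rewrite /hradii /=; tauto. Qed.

Lemma hdistC (A B : set V) : hdist A B = hdist B A.
Proof. exact: (congr1 inf (hradiiC A B)). Qed.

Lemma hradiiW (A B : set V) l l' : hradii A B l -> l <= l' -> hradii A B l'.
Proof.
move=> [l0 [AB BA]] ll'.
have sub (C : set V) : msum C (eball 0 l) `<=` msum C (eball 0 l').
  move=> _ [c Cc [e /eball0 el <-]]; exists c => //; exists e => //.
  by apply/eball0; apply: le_trans ll'.
split; first exact: lt_le_trans ll'.
by split=> x ?; apply: sub; [apply: AB | apply: BA].
Qed.

Lemma hdist_le (A B : set V) l : hradii A B l -> hdist A B <= l.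
Proof. by move=> h; apply: ge_inf h; exists 0 => r [/ltW]. Qed.

Lemma hradii_lt_hdist (A B : set V) l :
  hradii A B !=set0 -> hdist A B < l -> hradii A B l.
Proof. by move=> ne /(inf_lt ne) [l' h l'l]; apply: hradiiW h (ltW l'l). Qed.

Lemma hradii_trans (A B C : set V) l1 l2 :
  hradii A B l1 -> hradii B C l2 -> hradii A C (l1 + l2).
Proof.
have step (X Y Z : set V) r1 r2 : X `<=` msum Y (eball 0 r1) ->
    Y `<=` msum Z (eball 0 r2) -> X `<=` msum Z (eball 0 (r1 + r2)).
  move=> XY YZ x /XY [y Yy [e1 /eball0 e1r <-]].
  have [z Zz [e2 /eball0 e2r <-]] := YZ _ Yy.
  exists z => //; exists (e2 + e1); last by rewrite addrA.
  by apply/eball0; apply: le_trans (enormD _ _) _; lra.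
move=> [l10 [AB BA]] [l20 [BC CB]]; split; first exact: addr_gt0.
by split; [apply: step AB BC | rewrite addrC; apply: step CB BA].
Qed.

Lemma hdist_triangle (A B C : set V) : hradii A B !=set0 -> hradii B C !=set0 ->
  hdist A C <= hdist A B + hdist B C.
Proof.
move=> neAB neBC; apply/ler_addgt0Pr => e e0.
have h1 : hradii A B (hdist A B + e / 2) by apply: hradii_lt_hdist => //; lra.
have h2 : hradii B C (hdist B C + e / 2) by apply: hradii_lt_hdist => //; lra.
by apply: le_trans (hdist_le (hradii_trans h1 h2)) _; lra.
Qed.

Lemma compact_enorm_bound (A : set V) : compact A -> A !=set0 ->
  exists r, forall x, A x -> enorm x <= r.
Proof.
move=> cA neA.
have := compact_EVT_max neA cA (continuous_subspaceT (@enorm_continuous R n)).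
case=> x0 _ max.
by exists (enorm x0) => x Ax; apply: max; rewrite in_setE.
Qed.

Lemma convex_body_hradii_neq0 (A B : set V) :
  convex_body A -> convex_body B -> hradii A B !=set0.
Proof.
move=> [cA [_ [a0 Aa0]]] [cB [_ [b0 Bb0]]].
have [rA hA] := compact_enorm_bound cA (ex_intro _ a0 Aa0).
have [rB hB] := compact_enorm_bound cB (ex_intro _ b0 Bb0).
have rA0 : 0 <= rA by apply: le_trans (hA _ Aa0); exact: enorm_ge0.
have rB0 : 0 <= rB by apply: le_trans (hB _ Bb0); exact: enorm_ge0.
exists (rA + rB + 1); split; first lra.
split=> [a Aa | b Bb].
- exists b0 => //; exists (a - b0); last by rewrite addrC subrK.
  apply/eball0; apply: le_trans (enormD _ _) _; rewrite enormN.
  by have := hA _ Aa; have := hB _ Bb0; lra.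
- exists a0 => //; exists (b - a0); last by rewrite addrC subrK.
  apply/eball0; apply: le_trans (enormD _ _) _; rewrite enormN.
  by have := hA _ Aa0; have := hB _ Bb; lra.
Qed.

End Hausdorff.

Section MinkowskiAverage.
Variables (R : realType) (n : nat).
Notation V := 'rV[R]_n.

Lemma msumC (A B : set V) : msum A B = msum B A.
Proof.
by apply/funext => x; apply/propext; split=> -[a Aa [b Bb <-]];
  exists b => //; exists a => //; rewrite addrC.
Qed.

Lemma mavgC (A B : set V) : mavg A B = mavg B A.
Proof. by rewrite /mavg msumC. Qed.

Lemma mavg_convex_body (A B : set V) :
  convex_body A -> convex_body B -> convex_body (mavg A B).
Proof.
move=> [cA [vA [a0 Aa0]]] [cB [vB [b0 Bb0]]]; split; last split.
- have -> : mavg A B = (fun p : V * V => 2^-1 *: (p.1 + p.2)) @` (A `*` B).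
    apply/funext => x; apply/propext; split.
    + by move=> [s [a Aa [b Bb <-]] <-]; exists (a, b).
    + move=> [[a b] [/= Aa Bb] <-].
      by exists (a + b) => //; exists a => //; exists b.
  apply: continuous_compact; last exact: compact_setX.
  apply: continuous_subspaceT => p.
  by apply: (continuous_comp (@add_continuous _ p)); apply: scaler_continuous.
- move=> x y t [s [a Aa [b Bb <-]] <-] [s' [a' Aa' [b' Bb' <-]] <-] t01.
  exists (((1 - t) *: a + t *: a') + ((1 - t) *: b + t *: b')); last by row_ring.
  exists ((1 - t) *: a + t *: a'); first exact: vA.
  by exists ((1 - t) *: b + t *: b') => //; exact: vB.
- by exists (2^-1 *: (a0 + b0)); exists (a0 + b0) => //; exists a0 => //; exists b0.
Qed.

Lemma mavg_sub_eball (A B : set V) c c' r :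
  A `<=` eball c r -> B `<=` eball c' r -> mavg A B `<=` eball (2^-1 *: (c + c')) r.
Proof.
move=> Ac Bc' _ [_ [a Aa [b Bb <-]] <-]; rewrite /eball /=.
have -> : 2^-1 *: (a + b) - 2^-1 *: (c + c') = 2^-1 *: ((a - c) + (b - c')).
  by row_ring.
rewrite enormZ ger0_norm; last lra.
have := enormD (a - c) (b - c'); have := Ac _ Aa; have := Bc' _ Bb.
by rewrite /eball /=; lra.
Qed.

Lemma nearest_point_obtuse (A : set V) m p : is_convex A -> A p ->
  (forall q, A q -> sqnorm (m - p) <= sqnorm (m - q)) ->
  forall q, A q -> dot (q - p) (m - p) <= 0.
Proof.
move=> cvA Ap pmin q Aq; rewrite leNgt; apply/negP => k0.
move: k0 (sqnorm_ge0 (q - p)); set k := dot _ _; set D := sqnorm _ => k0 D0.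
pose t := k / (k + D).
have tE : t * (k + D) = k by rewrite /t mulfVK // gt_eqF // ltr_wpDr.
have t0 : 0 < t by rewrite /t divr_gt0 // ltr_wpDr.
have t01 : 0 <= t <= 1 by rewrite ltW //=; nra.
have := pmin _ (cvA _ _ t Ap Aq t01).
have -> : m - ((1 - t) *: p + t *: q) = (m - p) - t *: (q - p) by row_ring.
rewrite (sqnormB (m - p)) sqnormZ dotZr (dotC (m - p)) -/k -/D; nra.
Qed.

Lemma mavg_supporting_unit_ball (CA CB A B : set V) a b u :
  A = [set x | forall c, CA c -> eball c 1 x] ->
  B = [set x | forall c, CB c -> eball c 1 x] ->
  A a -> B b -> sqnorm u = 1 ->
  (forall q, mavg A B q -> dot (q - 2^-1 *: (a + b)) u <= 0) ->
  mavg A B `<=` eball (2^-1 *: (a + b) - u) 1.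
Proof.
move=> EA EB Aa Bb u1 normal.
have normal_half x x' : mavg A B (2^-1 *: (a + b) + 2^-1 *: (x' - x)) ->
    dot (x' - x) u <= 0.
  by move=> /normal; rewrite addrAC subrr add0r dotZl pmulr_rle0.
have -> : 2^-1 *: (a + b) - u = 2^-1 *: ((a - u) + (b - u)) by row_field.
apply: mavg_sub_eball.
- apply: (unit_balls_supporting_ball EA Aa u1) => a' Aa'; apply: normal_half.
  have -> : 2^-1 *: (a + b) + 2^-1 *: (a' - a) = 2^-1 *: (a' + b) by row_ring.
  by exists (a' + b) => //; exists a' => //; exists b.
- apply: (unit_balls_supporting_ball EB Bb u1) => b' Bb'; apply: normal_half.
  have -> : 2^-1 *: (a + b) + 2^-1 *: (b' - b) = 2^-1 *: (a + b') by row_ring.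
  by exists (a + b') => //; exists a => //; exists b'.
Qed.

Lemma mavg_separating_unit_ball (A B : set V) m : Sn A -> Sn B -> ~ mavg A B m ->
  exists2 c, mavg A B `<=` eball c 1 & ~ eball c 1 m.
Proof.
move=> [bA [CA EA]] [bB [CB EB]] Mm.
have [cM [cvM neM]] := mavg_convex_body bA bB.
have dist_cont : continuous (fun p : V => sqnorm (m - p)).
  move=> p; have diff_cont : {for p, continuous (fun q : V => m - q)}.
    by apply: continuousB; [exact: cst_continuous | exact: cvg_id].
  by apply: continuous_comp diff_cont _; apply: sqnorm_continuous.
have := compact_EVT_min neM cM (continuous_subspaceT dist_cont).
case=> p /set_mem Mp pmin.
have obtuse := nearest_point_obtuse cvM Mp (fun q Mq => pmin q (mem_set Mq)).
case: (Mp) => _ [a Aa [b Bb <-]] pE.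
have w0 : 0 < sqnorm (m - p).
  rewrite lt_def sqnorm_ge0 andbT; apply/eqP => /sqnorm_eq0/eqP.
  by rewrite subr_eq0 => /eqP mp; apply: Mm; rewrite mp.
set w := m - p in w0 obtuse; set e := enorm w.
have e0 : 0 < e by rewrite /e enormE sqrtr_gt0.
pose u := e^-1 *: w.
have u1 : sqnorm u = 1.
  by rewrite sqnormZ -enorm_sqr exprVn mulVf // expf_neq0 // gt_eqF.
exists (p - u).
  rewrite -pE; apply: mavg_supporting_unit_ball EA EB Aa Bb u1 _ => q Mq.
  by rewrite pE dotZr pmulr_rle0 ?invr_gt0 //; apply: obtuse.
rewrite /eball /=.
have -> : m - (p - u) = (1 + e^-1) *: w by rewrite /u /w; row_ring.
rewrite enormZ -/e ger0_norm; last by rewrite addr_ge0 // invr_ge0 ltW.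
by rewrite mulrDl mul1r mulVf ?gt_eqF //; lra.
Qed.

Lemma Sn_mavg (A B : set V) : Sn A -> Sn B -> Sn (mavg A B).
Proof.
move=> SA SB; split; first exact: mavg_convex_body SA.1 SB.1.
exists [set c | mavg A B `<=` eball c 1].
apply/seteqP; split=> [m Mm c /(_ m Mm) // | m Mm].
apply: contrapT => /(mavg_separating_unit_ball SA SB) [c sub out].
exact: out (Mm c sub).
Qed.

Lemma hradii_mavg (A B : set V) l :
  is_convex A -> hradii A B l -> hradii A (mavg A B) (l / 2).
Proof.
move=> cvA [l0 [AB BA]]; split; first lra.
split.
- move=> a Aa; have [b Bb [e /eball0 el be]] := AB _ Aa.
  exists (2^-1 *: (a + b)); first by exists (a + b) => //; exists a => //; exists b.
  exists (2^-1 *: e); last by rewrite -be; row_field.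
  by apply/eball0; rewrite enormZ ger0_norm; lra.
- move=> _ [_ [a Aa [b Bb <-]] <-].
  have [a' Aa' [e /eball0 el be]] := BA _ Bb.
  exists (2^-1 *: (a + a')).
    have -> : 2^-1 *: (a + a') = (1 - 2^-1) *: a + 2^-1 *: a' by row_field.
    by apply: cvA => //; apply/andP; split; lra.
  exists (2^-1 *: e); last by rewrite -be; row_field.
  by apply/eball0; rewrite enormZ ger0_norm; lra.
Qed.

Lemma hdist_mavg_le (A B : set V) : convex_body A -> convex_body B ->
  hdist A (mavg A B) <= hdist A B / 2.
Proof.
move=> bA bB; rewrite ler_pdivlMr //.
apply: lb_le_inf; first exact: convex_body_hradii_neq0.
by move=> l /(hradii_mavg bA.2.1)/hdist_le; lra.
Qed.

Lemma hdist_mavgl (A B : set V) : convex_body A -> convex_body B ->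
  hdist A (mavg A B) = hdist A B / 2.
Proof.
move=> bA bB; have bM := mavg_convex_body bA bB.
have := hdist_triangle (convex_body_hradii_neq0 bA bM)
                       (convex_body_hradii_neq0 bM bB).
have := hdist_mavg_le bA bB; have := hdist_mavg_le bB bA.
by rewrite mavgC (hdistC B) (hdistC B A); lra.
Qed.

End MinkowskiAverage.

Section IsometryImage.
Variables (R : realType) (n : nat) (T : set 'rV[R]_n -> set 'rV[R]_n).
Variables (K0 K1 : set 'rV[R]_n).
Hypotheses (isoT : Sn_bij_isometry T) (cute : Sn_cute K0 K1).

Lemma equidistant_eq_image_mavg M : Sn M ->
  hdist (T K0) M = hdist K0 K1 / 2 -> hdist (T K1) M = hdist K0 K1 / 2 ->
  M = T (mavg K0 K1).
Proof.
have [_ [_ [Tsurj Tiso]]] := isoT; have [S0 [S1 [_ [_ [_ uniq]]]]] := cute.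
move=> /Tsurj [N [SN <-]]; rewrite !Tiso // => h0 h1.
by rewrite (uniq N).
Qed.

End IsometryImage.

Theorem lemma4 (R : realType) (n : nat) (T : set 'rV[R]_n -> set 'rV[R]_n)
  (K0 K1 : set 'rV[R]_n) :
  Sn_bij_isometry T -> Sn_cute K0 K1 ->
  Sn_cute (T K0) (T K1) /\ T (mavg K0 K1) = mavg (T K0) (T K1).
Proof.
move=> isoT cute; have [TS [_ [_ Tiso]]] := isoT; have [S0 [S1 _]] := cute.
have [TS0 TS1] := (TS _ S0, TS _ S1).
have d : hdist (T K0) (T K1) = hdist K0 K1 := Tiso _ _ S0 S1.
have h0 : hdist (T K0) (mavg (T K0) (T K1)) = hdist K0 K1 / 2.
  by rewrite hdist_mavgl ?d //; [apply: TS0.1 | apply: TS1.1].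
have h1 : hdist (T K1) (mavg (T K0) (T K1)) = hdist K0 K1 / 2.
  by rewrite mavgC hdist_mavgl 1?hdistC ?d //; [apply: TS1.1 | apply: TS0.1].
have SM := Sn_mavg TS0 TS1.
have TM := equidistant_eq_image_mavg isoT cute SM h0 h1.
split; last by rewrite TM.
do 3!split=> //; rewrite d; do 2!split=> //.
by move=> M SM' hM0 hM1; rewrite TM; apply: equidistant_eq_image_mavg.
Qed.
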